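(* Let $d\ge1$, $n\ge2$ be integers, $\kappa_d$ the volume of the $d$-dimensional unit ball, $V\ge0$, $c\in(0,\infty)$, $-d/2<\tau_1<\dots<\tau_n$ reals, $a_i=\tau_i+d$, $x_i=\tau_i+d/2$. Let $\Sigma_n^{\mathrm{sb}}$ have entries $\frac{Vd\kappa_d}{2(x_i+x_j)}$, $\Sigma_n^{\mathrm{sp}}$ entries $\frac{Vd^2\kappa_d^2}{a_ia_j}$, and $\Sigma_n^{\mathrm{cr}}=\Sigma_n^{\mathrm{sb}}+c\Sigma_n^{\mathrm{sp}}$ if $c\le1$, $\Sigma_n^{\mathrm{cr}}=\frac1c\Sigma_n^{\mathrm{sb}}+\Sigma_n^{\mathrm{sp}}$ if $c>1$, with eigenvalues $\lambda_1^{\mathrm{cr}}\le\dots\le\lambda_n^{\mathrm{cr}}$. Put $Q=\sum_{l,k=1}^n\frac{n}{(x_k+x_l)^2}-\big(\sum_{i=1}^n\frac1{2x_i}\big)^2$, $$\bar S_n=\frac{Vd\kappa_d\big(\sum_{i=1}^n\frac1{2x_i}+\sqrt{(n-1)Q}\big)}{2n},\qquad \underline S_n=\frac{Vd\kappa_d\prod_{1\le i<j\le n}(x_i-x_j)^2}{2\prod_{1\le i,j\le n}(x_i+x_j)\Big(\frac{\sum_{i=1}^n\frac{\sqrt{n-1}}{2x_i}+\sqrt Q}{n\sqrt{n-1}}\Big)^{n-1}}.$$ Then $\underline U_n\le\lambda_1^{\mathrm{cr}}\le\dots\le\lambda_n^{\mathrm{cr}}\le\bar U_n$, where (i) for $c\in(0,1]$: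 $\underline U_n=\underline S_n$ and $\bar U_n=\bar S_n+\sum_{i=1}^n\frac{cVd^2\kappa_d^2}{a_i^2}$; (ii) for $c\in(1,\infty)$: $\underline U_n=\underline S_n/c$ and $\bar U_n=\bar S_n/c+\sum_{i=1}^n\frac{Vd^2\kappa_d^2}{a_i^2}$.
   Context: $\Sigma_n^{\mathrm{cr}}$ is the asymptotic covariance matrix of normalized length power functionals in the critical regime $t\delta_t^d\to c$. *)

From mathcomp Require Import all_boot all_order all_algebra.
From mathcomp Require Import all_classical all_reals all_analysis.
Import Order.TTheory GRing.Theory Num.Theory.
Local Open Scope ring_scope.

(* Volume of the d-dimensional unit ball, via the standard recursion
   kappa_0 = 1, kappa_1 = 2, kappa_(d+2) = 2 pi / (d+2) * kappa_d
   (equivalently pi^(d/2) / Gamma(d/2 + 1)). *)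
Fixpoint ball_vol_aux (R : realType) (d : nat) : R * R :=
  (* returns (kappa_d, kappa_(d+1)) *)
  match d with
  | 0%N => (1, 2)
  | d'.+1 => let p := ball_vol_aux R d' in
             (p.2, (2 * pi / (d'.+2)%:R) * p.1)
  end.
Definition ball_vol (R : realType) (d : nat) : R := (ball_vol_aux R d).1.

Definition Sigma_sb (R : realType) (n d : nat) (V : R) (tau : 'I_n -> R)
  : 'M[R]_n :=
  \matrix_(i, j) (V * d%:R * ball_vol R d /
                  (2 * ((tau i + d%:R / 2) + (tau j + d%:R / 2)))).

Definition Sigma_sp (R : realType) (n d : nat) (V : R) (tau : 'I_n -> R)
  : 'M[R]_n :=
  \matrix_(i, j) (V * (d%:R) ^+ 2 * ball_vol R d ^+ 2 /
                  ((tau i + d%:R) * (tau j + d%:R))).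

Definition Sigma_cr (R : realType) (n d : nat) (V c : R) (tau : 'I_n -> R)
  : 'M[R]_n :=
  if c <= 1 then Sigma_sb R n d V tau + c *: Sigma_sp R n d V tau
  else c^-1 *: Sigma_sb R n d V tau + Sigma_sp R n d V tau.

Definition xx (R : realType) (n d : nat) (tau : 'I_n -> R) (i : 'I_n) : R :=
  tau i + d%:R / 2.

Definition Qn (R : realType) (n d : nat) (tau : 'I_n -> R) : R :=
  (\sum_(l < n) \sum_(k < n) n%:R / (xx R n d tau k + xx R n d tau l) ^+ 2)
  - (\sum_(i < n) (2 * xx R n d tau i)^-1) ^+ 2.

Definition S_upper (R : realType) (n d : nat) (V : R) (tau : 'I_n -> R) : R :=
  V * d%:R * ball_vol R d *
  ((\sum_(i < n) (2 * xx R n d tau i)^-1) + Num.sqrt ((n%:R - 1) * Qn R n d tau))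
  / (2 * n%:R).

Definition S_lower (R : realType) (n d : nat) (V : R) (tau : 'I_n -> R) : R :=
  V * d%:R * ball_vol R d *
  (\prod_(i < n) \prod_(j < n | (i < j)%N) (xx R n d tau i - xx R n d tau j) ^+ 2)
  / (2 * (\prod_(i < n) \prod_(j < n) (xx R n d tau i + xx R n d tau j)) *
     (((\sum_(i < n) Num.sqrt (n%:R - 1) / (2 * xx R n d tau i)) + Num.sqrt (Qn R n d tau))
       / (n%:R * Num.sqrt (n%:R - 1))) ^+ n.-1).

(* Sigma^sb is a nonnegative multiple of the Cauchy matrix C = (1 / (x_i + x_j)) and
   Sigma^sp one of a a^T with a_i = 1 / (tau_i + d), so Sigma^cr
   = g C + h a a^T with g, h >= 0. For an eigenvector v, lam |v|^2 = g v C v^T +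
   h (a . v)^2, and Cauchy-Schwarz bounds the second term by h |a|^2 |v|^2; it
   remains to bound the Rayleigh quotient of C by its extreme eigenvalues.
   C is positive semidefinite, since its Schur complement is again a rescaled
   Cauchy matrix. Samuelson's inequality bounds every eigenvalue of C in terms of
   tr C and tr C^2, which gives the upper bound; Cauchy's determinant formula
   det C = prod mu_k together with AM-GM on the remaining n - 1 eigenvalues gives
   the lower bound. *)

From mathcomp Require Import all_boot all_order all_algebra.
From mathcomp Require Import all_classical all_reals all_analysis.
From mathcomp Require Import complex spectral sesquilinear ring lra.
Import Order.TTheory GRing.Theory Num.Theory.
Set Implicit Arguments.
Unset Strict Implicit.
Unset Printing Implicit Defensive.
Local Open Scope ring_scope.

Lemma quad_formE (R : comPzRingType) n (v : 'rV[R]_n) (M : 'M[R]_n) :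
  (v *m M *m v^T) 0 0 = \sum_i \sum_j v 0 i * v 0 j * M i j.
Proof.
rewrite mxE; under eq_bigr => j _ do rewrite !mxE mulr_suml.
by rewrite exchange_big; apply: eq_bigr => i _; apply: eq_bigr => j _; ring.
Qed.

Section RowForms.
Variables (R : realDomainType) (n : nat).
Implicit Types (v : 'rV[R]_n).

Lemma dotE (u v : 'rV[R]_n) : (u *m v^T) 0 0 = \sum_i u 0 i * v 0 i.
Proof. by rewrite mxE; apply: eq_bigr => i _; rewrite mxE. Qed.

Lemma dot_selfE v : (v *m v^T) 0 0 = \sum_i v 0 i ^+ 2.
Proof. by rewrite dotE; apply: eq_bigr => i _; rewrite expr2. Qed.

Lemma dot_self_gt0 v : v != 0 -> 0 < (v *m v^T) 0 0.
Proof.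
move=> v_neq0; rewrite dot_selfE lt_def sumr_ge0 ?andbT => [|i _]; last exact: sqr_ge0.
apply: contra v_neq0 => /eqP sum_eq0; apply/eqP/rowP => i; rewrite mxE.
apply/eqP; rewrite -sqrf_eq0; apply/eqP.
by apply: (psumr_eq0P _ sum_eq0) => // j _; exact: sqr_ge0.
Qed.

Lemma CauchySchwarz_sum (I : finType) (P : pred I) (u w : I -> R) :
  (\sum_(i | P i) u i * w i) ^+ 2 <=
  (\sum_(i | P i) u i ^+ 2) * (\sum_(i | P i) w i ^+ 2).
Proof.
set A := \sum_(i | P i) u i ^+ 2; set B := \sum_(i | P i) u i * w i.
set W := \sum_(i | P i) w i ^+ 2.
have A_ge0 : 0 <= A by apply: sumr_ge0 => i _; exact: sqr_ge0.
have [A_gt0|] := ltrP 0 A.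
  have : 0 <= \sum_(i | P i) (B * u i - A * w i) ^+ 2.
    by apply: sumr_ge0 => i _; exact: sqr_ge0.
  have -> : \sum_(i | P i) (B * u i - A * w i) ^+ 2 = A * (A * W - B ^+ 2).
    transitivity (\sum_(i | P i) (B ^+ 2 * u i ^+ 2 - (2 * A * B) * (u i * w i)
                                  + A ^+ 2 * w i ^+ 2)).
      by apply: eq_bigr => i _; ring.
    rewrite big_split sumrB /= -!mulr_sumr -/A -/B -/W; ring.
  by rewrite pmulr_rge0 // subr_ge0 mulrC.
move=> A_le0; have A_eq0 : A = 0 by apply/eqP; rewrite eq_le A_le0 A_ge0.
have u0 i : P i -> u i = 0.
  move=> Pi; apply/eqP; rewrite -sqrf_eq0; apply/eqP.
  by apply: (psumr_eq0P _ A_eq0) => // j _; exact: sqr_ge0.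
by rewrite /B big1 => [|i Pi]; rewrite ?u0 ?mul0r ?expr0n ?A_eq0 ?mul0r.
Qed.

Lemma CauchySchwarz_row (u v : 'rV[R]_n) :
  ((u *m v^T) 0 0) ^+ 2 <= (u *m u^T) 0 0 * (v *m v^T) 0 0.
Proof. by rewrite !dot_selfE dotE; exact: CauchySchwarz_sum. Qed.

End RowForms.

Section MeanInequalities.
Variable R : rcfType.

Lemma samuelson_sqr n (D : 'I_n -> R) k :
  (n%:R * D k - \sum_i D i) ^+ 2 <=
  (n%:R - 1) * (n%:R * \sum_i D i ^+ 2 - (\sum_i D i) ^+ 2).
Proof.
rewrite [\sum_i D i](bigD1 k) //= [\sum_i D i ^+ 2](bigD1 k) //=.
set s := \sum_(i | i != k) D i; set q := \sum_(i | i != k) D i ^+ 2.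
have card_k : \sum_(i | i != k) 1 ^+ 2 = n%:R - 1 :> R.
  rewrite expr1n sumr_const cardC1 card_ord -subn1 natrB //.
  exact: leq_ltn_trans (ltn_ord k).
have CS : s ^+ 2 <= (n%:R - 1) * q.
  have := CauchySchwarz_sum (fun i => i != k) (fun=> 1) D.
  by rewrite card_k; under eq_bigr do rewrite mul1r.
have -> : (n%:R - 1) * (n%:R * (D k ^+ 2 + q) - (D k + s) ^+ 2) =
   (n%:R * D k - (D k + s)) ^+ 2 + n%:R * ((n%:R - 1) * q - s ^+ 2) by ring.
by rewrite lerDl mulr_ge0 // subr_ge0.
Qed.

Lemma samuelson n (D : 'I_n -> R) k
    (r := Num.sqrt ((n%:R - 1) * (n%:R * \sum_i D i ^+ 2 - (\sum_i D i) ^+ 2))) :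
  (\sum_i D i - r) / n%:R <= D k <= (\sum_i D i + r) / n%:R.
Proof.
have n_gt0 : 0 < n%:R :> R by rewrite ltr0n; exact: leq_ltn_trans (ltn_ord k).
have : `|n%:R * D k - \sum_i D i| <= r by rewrite -sqrtr_sqr ler_wsqrtr // samuelson_sqr.
rewrite ler_norml => /andP[lo hi].
by rewrite !ler_pdivrMr // !ler_pdivlMr // ![D k * _]mulrC; apply/andP; split; lra.
Qed.

Lemma prod_le_AGM_rest n (D : 'I_n -> R) j : (forall i, 0 <= D i) ->
  \prod_i D i <= D j * ((\sum_i D i - D j) / (n%:R - 1)) ^+ n.-1.
Proof.
move=> D_ge0; rewrite [\sum_i D i](bigD1 j) //= [\prod_i D i](bigD1 j) //= addrC addrK.
apply: ler_wpM2l => //.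
have := (leif_AGM (A := predC1 j) (E := D) (fun i _ => D_ge0 i)).1.
rewrite cardC1 card_ord -subn1 natrB ?subn1 //.
exact: leq_ltn_trans (ltn_ord j).
Qed.

End MeanInequalities.

Section ConjugateByUnit.
Variables (F : fieldType) (n : nat) (P : 'M[F]_n).
Hypothesis P_unit : P \in unitmx.

Lemma mxtrace_conjV (B : 'M[F]_n) : \tr (invmx P *m B *m P) = \tr B.
Proof. by rewrite mxtrace_mulC mulmxA mulmxV // mul1mx. Qed.

Lemma det_conjV (B : 'M[F]_n) : \det (invmx P *m B *m P) = \det B.
Proof.
have detP : \det P != 0 by rewrite -unitfE -unitmxE.
by rewrite !det_mulmx det_inv mulrAC mulVf // mul1r.
Qed.

Lemma mulmx_conjV (B B' : 'M[F]_n) :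
  (invmx P *m B *m P) *m (invmx P *m B' *m P) = invmx P *m (B *m B') *m P.
Proof. by rewrite !mulmxA mulmxK. Qed.

Lemma eigenvalue_conjV_diag (d : 'rV[F]_n) k :
  eigenvalue (invmx P *m diag_mx d *m P) (d 0 k).
Proof.
apply/eigenvalueP; exists (delta_mx 0 k *m P).
  rewrite !mulmxA mulmxK // scalemxAl; congr (_ *m _).
  by rewrite -rowE row_diag_mx.
apply: contraTneq isT => /(congr1 (mulmx^~ (invmx P))).
rewrite mulmxK // mul0mx => /matrixP/(_ 0 k)/eqP.
by rewrite !mxE !eqxx oner_eq0.
Qed.

End ConjugateByUnit.

Section UnitaryDiagonalForm.
Variables (C : numClosedFieldType) (n : nat) (P : 'M[C]_n).
Hypothesis P_unitary : P \is unitarymx.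
Local Open Scope sesquilinear_scope.

Lemma unitary_conj_form (B : 'M[C]_n) (v : 'rV[C]_n) :
  v *m (invmx P *m B *m P) *m v ^t* = (v *m P ^t*) *m B *m (v *m P ^t*) ^t*.
Proof.
by rewrite invmx_unitary // trmx_mul map_mxM trmxCK !mulmxA.
Qed.

Lemma diag_form (d : 'rV[C]_n) (u : 'rV[C]_n) :
  (u *m diag_mx d *m u ^t*) 0 0 = \sum_k d 0 k * `|u 0 k| ^+ 2.
Proof.
rewrite mxE; apply: eq_bigr => k _.
by rewrite mul_mx_diag !mxE normCK mulrAC mulrC.
Qed.

Lemma unitary_norm_form (v : 'rV[C]_n) :
  (v *m v ^t*) 0 0 = \sum_k `|(v *m P ^t*) 0 k| ^+ 2.
Proof.
have P_unit : P \in unitmx by exact: unitarymx_unit.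
have -> : v *m v ^t* = v *m (invmx P *m diag_mx (const_mx 1) *m P) *m v ^t*.
  by rewrite diag_const_mx mulmx1 mulVmx // mulmx1.
by rewrite unitary_conj_form diag_form; under eq_bigr do rewrite mxE mul1r.
Qed.

End UnitaryDiagonalForm.

Section RealSymmetricSpectrum.
Variables (R : rcfType) (n : nat).
Local Notation toC := (real_complex R).
Local Open Scope sesquilinear_scope.

(* Meaningful for symmetric A only: then the complex spectrum of A is real. *)
Definition sym_eig (A : 'M[R]_n) (k : 'I_n) : R :=
  complex.Re (spectral_diag (map_mx toC A) 0 k).

Variable A : 'M[R]_n.
Hypothesis A_sym : A^T = A.

Let P := spectralmx (map_mx toC A).
Let P_unit : P \in unitmx := spectral_unit _.

Lemma toC_real (x : R) : toC x \is Num.real.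
Proof. by apply/complex_realP; exists x. Qed.

Lemma sym_spectral :
  map_mx toC A = invmx P *m diag_mx (map_mx toC (\row_k sym_eig A k)) *m P.
Proof.
have A_herm : map_mx toC A \is hermsymmx.
  apply: realsym_hermsym; last by apply/mxOverP => i j; rewrite mxE toC_real.
  by apply/is_hermitianmxP; rewrite expr0 scale1r map_mx_id // map_trmx A_sym.
have -> : map_mx toC (\row_k sym_eig A k) = spectral_diag (map_mx toC A).
  apply/rowP => k; rewrite !mxE RRe_real //.
  exact: (mxOverP (hermitian_spectral_diag_real A_herm)).
exact/orthomx_spectralP/hermitian_normalmx.
Qed.

Lemma mxtrace_sym_eig : \tr A = \sum_k sym_eig A k.
Proof.
apply: complexI; rewrite -trace_map_mx sym_spectral mxtrace_conjV // mxtrace_diag.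
by rewrite rmorph_sum; apply: eq_bigr => k _; rewrite !mxE.
Qed.

Lemma mxtrace_sqr_sym_eig : \tr (A *m A) = \sum_k sym_eig A k ^+ 2.
Proof.
apply: complexI; rewrite -trace_map_mx map_mxM sym_spectral mulmx_conjV //.
rewrite mxtrace_conjV // mulmx_diag mxtrace_diag rmorph_sum.
by apply: eq_bigr => k _; rewrite !mxE rmorphXn.
Qed.

Lemma det_sym_eig : \det A = \prod_k sym_eig A k.
Proof.
apply: complexI; rewrite -det_map_mx sym_spectral det_conjV // det_diag.
by rewrite rmorph_prod; apply: eq_bigr => k _; rewrite !mxE.
Qed.

Lemma eigenvalue_sym_eig k : eigenvalue A (sym_eig A k).
Proof.
rewrite -(eigenvalue_map toC) sym_spectral.
by have := eigenvalue_conjV_diag P_unit (map_mx toC (\row_k sym_eig A k)) k; rewrite !mxE.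
Qed.

Lemma sym_form_weights (v : 'rV[R]_n) :
  exists w : 'I_n -> R, [/\ forall k, 0 <= w k,
    \sum_k w k = (v *m v^T) 0 0 &
    (v *m A *m v^T) 0 0 = \sum_k sym_eig A k * w k].
Proof.
have P_unitary : P \is unitarymx := spectral_unitarymx _.
set u := map_mx toC v *m P ^t*.
have real_adj : (map_mx toC v) ^t* = map_mx toC v^T.
  by apply/matrixP => i j; rewrite !mxE conj_Creal ?toC_real.
have toC_entry (M : 'M[R]_1) : toC (M 0 0) = map_mx toC M 0 0 by rewrite mxE.
pose w k := complex.Re (u 0 k) ^+ 2 + complex.Im (u 0 k) ^+ 2.
have wE k : toC (w k) = `|u 0 k| ^+ 2 by rewrite add_Re2_Im2.
exists w; split.
- by move=> k; rewrite addr_ge0 ?sqr_ge0.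
- apply: complexI; rewrite rmorph_sum.
  rewrite toC_entry map_mxM -real_adj (unitary_norm_form P_unitary).
  by apply: eq_bigr => k _; exact: wE.
- apply: complexI; rewrite rmorph_sum.
  rewrite toC_entry !map_mxM -real_adj sym_spectral.
  rewrite unitary_conj_form // diag_form; apply: eq_bigr => k _.
  by rewrite rmorphM /= wE !mxE.
Qed.

Lemma sym_eig_ge0 :
  (forall v : 'rV[R]_n, 0 <= (v *m A *m v^T) 0 0) -> forall k, 0 <= sym_eig A k.
Proof.
move=> A_psd k; have /eigenvalueP [v Av v_neq0] := eigenvalue_sym_eig k.
by have := A_psd v; rewrite Av -scalemxAl mxE pmulr_lge0 // dot_self_gt0.
Qed.

Lemma sym_rayleigh (lo hi : R) (v : 'rV[R]_n) :
  (forall k, lo <= sym_eig A k <= hi) ->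
  lo * (v *m v^T) 0 0 <= (v *m A *m v^T) 0 0 <= hi * (v *m v^T) 0 0.
Proof.
move=> eig_bounds; have [w [w_ge0 <- ->]] := sym_form_weights v.
rewrite !mulr_sumr; apply/andP; split; apply: ler_sum => k _;
  have /andP[lo_k hi_k] := eig_bounds k; exact: ler_wpM2r.
Qed.

End RealSymmetricSpectrum.

Section SymmetricEigenvalueBounds.
Variables (R : rcfType) (n : nat).

Definition eig_spread (A : 'M[R]_n) : R :=
  Num.sqrt ((n%:R - 1) * (n%:R * \tr (A *m A) - \tr A ^+ 2)).

Definition eig_ub (A : 'M[R]_n) : R := (\tr A + eig_spread A) / n%:R.

(* The eigenvalues other than mu_k have mean (tr A - mu_k) / (n - 1), at most
   (tr A - (tr A - spread) / n) / (n - 1) by Samuelson, so AM-GM gives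
   det A <= mu_k * mean ^ (n - 1). *)
Definition eig_lb (A : 'M[R]_n) : R :=
  \det A / ((\tr A - (\tr A - eig_spread A) / n%:R) / (n%:R - 1)) ^+ n.-1.

Variable A : 'M[R]_n.
Hypothesis A_sym : A^T = A.

Lemma sym_eig_samuelson k :
  (\tr A - eig_spread A) / n%:R <= sym_eig A k <= eig_ub A.
Proof.
rewrite /eig_ub /eig_spread mxtrace_sqr_sym_eig // mxtrace_sym_eig //.
exact: samuelson.
Qed.

Hypothesis A_psd : forall v : 'rV[R]_n, 0 <= (v *m A *m v^T) 0 0.
Hypothesis n_gt1 : (1 < n)%N.

Lemma eig_lb_le_sym_eig k : eig_lb A <= sym_eig A k.
Proof.
have eig_ge0 := sym_eig_ge0 A_sym A_psd.
have n1_gt0 : 0 < n%:R - 1 :> R by rewrite subr_gt0 ltr1n.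
set m := (\tr A - (\tr A - eig_spread A) / n%:R) / (n%:R - 1).
have rest_mean j : 0 <= (\tr A - sym_eig A j) / (n%:R - 1) <= m.
  apply/andP; split.
    rewrite divr_ge0 ?(ltW n1_gt0) // mxtrace_sym_eig // (bigD1 j) //= addrC addrK.
    by apply: sumr_ge0 => i _; exact: eig_ge0.
  rewrite /m ler_pM2r ?invr_gt0 // lerD2l lerN2.
  by case/andP: (sym_eig_samuelson j).
have m_ge0 : 0 <= m by case/andP: (rest_mean k) => ge0 le_m; exact: le_trans le_m.
have det_le j : \det A <= sym_eig A j * m ^+ n.-1.
  rewrite det_sym_eig //; apply: le_trans (prod_le_AGM_rest j eig_ge0) _.
  rewrite -mxtrace_sym_eig // ler_wpM2l // lerXn2r // ?nnegrE //.
    by case/andP: (rest_mean j).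
  by case/andP: (rest_mean j).
rewrite /eig_lb -/m; have := exprn_ge0 n.-1 m_ge0.
rewrite le_eqVlt => /orP[/eqP <-|m_gt0]; first by rewrite invr0 mulr0 eig_ge0.
by rewrite ler_pdivrMr // mulrC det_le.
Qed.

Lemma sym_psd_rayleigh (v : 'rV[R]_n) :
  eig_lb A * (v *m v^T) 0 0 <= (v *m A *m v^T) 0 0 <= eig_ub A * (v *m v^T) 0 0.
Proof.
apply: sym_rayleigh => // k.
by rewrite eig_lb_le_sym_eig //=; case/andP: (sym_eig_samuelson k).
Qed.

End SymmetricEigenvalueBounds.

Section RankOneUpdate.
Variables (R : realFieldType) (n : nat) (B : 'M[R]_n) (lo hi : R).
Hypothesis B_bounds : forall v : 'rV[R]_n,
  lo * (v *m v^T) 0 0 <= (v *m B *m v^T) 0 0 <= hi * (v *m v^T) 0 0.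

Lemma eigenvalue_rank_one_update (u : 'rV[R]_n) (g h lam : R) :
    0 <= g -> 0 <= h -> eigenvalue (g *: B + h *: (u^T *m u)) lam ->
  g * lo <= lam <= g * hi + h * (u *m u^T) 0 0.
Proof.
move=> g_ge0 h_ge0 /eigenvalueP [v Av v_neq0].
have vv_gt0 := dot_self_gt0 v_neq0.
set p := (v *m u^T) 0 0.
have formE : (v *m (u^T *m u) *m v^T) 0 0 = p ^+ 2.
  rewrite !mulmxA -mulmxA.
  have -> : u *m v^T = (v *m u^T)^T by rewrite trmx_mul trmxK.
  by rewrite mxE big_ord1 [_^T _ _]mxE expr2 (ord1 ord0).
have lamE : lam * (v *m v^T) 0 0 = g * (v *m B *m v^T) 0 0 + h * p ^+ 2.
  have -> : lam * (v *m v^T) 0 0 = ((lam *: v) *m v^T) 0 0.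
    by rewrite -scalemxAl [RHS]mxE.
  rewrite -Av mulmxDr mulmxDl mxE -!scalemxAr -!scalemxAl.
  by rewrite [X in X + _]mxE [X in _ + X]mxE formE.
have /andP[lo_v hi_v] := B_bounds v.
have p_le : p ^+ 2 <= (u *m u^T) 0 0 * (v *m v^T) 0 0.
  by rewrite mulrC /p; have := CauchySchwarz_row v u.
apply/andP; split.
  rewrite -(ler_pM2r vv_gt0) lamE -mulrA.
  by apply: ler_wpDr; [exact: mulr_ge0 h_ge0 (sqr_ge0 p) | exact: ler_wpM2l].
rewrite -(ler_pM2r vv_gt0) lamE mulrDl -!mulrA.
by apply: lerD; rewrite ler_wpM2l.
Qed.

End RankOneUpdate.

Section SchurComplement.
Variables (F : fieldType) (n : nat) (M : 'M[F]_n.+1).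

Definition schur_ord0 : 'M[F]_n := \matrix_(i, j)
  (M (lift ord0 i) (lift ord0 j)
   - M (lift ord0 i) ord0 * M ord0 (lift ord0 j) / M ord0 ord0).

Lemma det_schur_ord0 : M ord0 ord0 != 0 -> \det M = M ord0 ord0 * \det schur_ord0.
Proof.
move=> M00_neq0.
pose E : 'M[F]_n.+1 :=
  \matrix_(i, j) (((j == ord0) && (i != ord0))%:R * M i ord0 / M ord0 ord0).
have EM i j : (E *m M) i j = (i != ord0)%:R * M i ord0 / M ord0 ord0 * M ord0 j.
  rewrite mxE big_ord_recl big1 ?addr0 => [|k _]; first by rewrite !mxE.
  by rewrite !mxE /= !mul0r.
have det_1E : \det (1%:M - E) = 1.
  rewrite det_trig; last first.
    apply/is_trig_mxP => i j lt_ij; rewrite !mxE.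
    have /negbTE -> : i != j by apply: contraTneq lt_ij => ->; rewrite ltnn.
    have /negbTE -> : j != ord0 by apply: contraTneq lt_ij => ->.
    by rewrite !mul0r subrr.
  by apply: big1 => i _; rewrite !mxE eqxx andbN !mul0r subr0.
have -> : \det M = \det (M - E *m M).
  by rewrite -[LHS]mul1r -det_1E -det_mulmx mulmxBl mul1mx.
have ME i j : (M - E *m M) i j =
    M i j - (i != ord0)%:R * M i ord0 / M ord0 ord0 * M ord0 j.
  by rewrite mxE [X in _ + X]mxE EM.
rewrite (expand_det_col _ ord0) big_ord_recl big1 ?addr0 => [|i _]; last first.
  by rewrite ME /= mul1r divfK // subrr mul0r.
rewrite ME /= !mul0r subr0 /cofactor /= expr0 mul1r; congr (_ * \det _).
by apply/matrixP => i j; rewrite [RHS]mxE 2![LHS]mxE ME eq_sym neq_lift mul1r mulrAC.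
Qed.

Lemma quad_form_schur_ord0 (v : 'rV[F]_n.+1) :
    M^T = M -> M ord0 ord0 != 0 ->
  let s := \sum_(j < n) v 0 (lift ord0 j) * M ord0 (lift ord0 j) in
  let v' := \row_j v 0 (lift ord0 j) in
  (v *m M *m v^T) 0 0 =
    M ord0 ord0 * (v 0 ord0 + s / M ord0 ord0) ^+ 2 + (v' *m schur_ord0 *m v'^T) 0 0.
Proof.
move=> M_sym M00_neq0 s v'.
have Msym i j : M j i = M i j by rewrite -[in LHS]M_sym mxE.
rewrite !quad_formE big_ord_recl big_ord_recl /=.
under [X in _ + X = _]eq_bigr => i _ do rewrite big_ord_recl.
rewrite big_split /=.
under [in RHS]eq_bigr => i _ do under eq_bigr => j _ do rewrite !mxE mulrBr.
under [in RHS]eq_bigr => i _ do rewrite sumrB.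
rewrite sumrB.
have -> : \sum_(i < n) \sum_(j < n) v 0 (lift ord0 i) * v 0 (lift ord0 j) *
   (M (lift ord0 i) ord0 * M ord0 (lift ord0 j) / M ord0 ord0) = s ^+ 2 / M ord0 ord0.
  rewrite expr2 big_distrlr /= mulr_suml; apply: eq_bigr => i _.
  rewrite mulr_suml; apply: eq_bigr => j _; rewrite Msym; ring.
have -> : \sum_(i < n) v 0 ord0 * v 0 (lift ord0 i) * M ord0 (lift ord0 i) = v 0 ord0 * s.
  by rewrite mulr_sumr; apply: eq_bigr => i _; ring.
have -> : \sum_(i < n) v 0 (lift ord0 i) * v 0 ord0 * M (lift ord0 i) ord0 = v 0 ord0 * s.
  by rewrite mulr_sumr; apply: eq_bigr => i _; rewrite Msym; ring.
by field.
Qed.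

End SchurComplement.

Section CauchyMatrix.
Variable R : realFieldType.

Definition cauchymx n (x : 'I_n -> R) : 'M[R]_n := \matrix_(i, j) (x i + x j)^-1.

Lemma tr_cauchymx n (x : 'I_n -> R) : (cauchymx x)^T = cauchymx x.
Proof. by apply/matrixP => i j; rewrite !mxE addrC. Qed.

Lemma schur_cauchymx n (x : 'I_n.+1 -> R) (a := x ord0) (y := x \o lift ord0) :
    (forall i j, x i + x j != 0) ->
  schur_ord0 (cauchymx x) =
    diag_mx (\row_i ((y i - a) / (y i + a))) *m cauchymx y
    *m diag_mx (\row_i ((y i - a) / (y i + a))).
Proof.
move=> x_neq0; apply/matrixP => i j; rewrite mul_mx_diag mul_diag_mx !mxE /=.
have ai := x_neq0 (lift ord0 i) ord0; have aj := x_neq0 (lift ord0 j) ord0.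
have ij := x_neq0 (lift ord0 i) (lift ord0 j); have aa := x_neq0 ord0 ord0.
by rewrite /y /a /= [x ord0 + _]addrC; field; rewrite ai aj ij aa.
Qed.

Lemma prod_ltn_ord_recl n (F : 'I_n.+1 -> 'I_n.+1 -> R) :
  \prod_(i < n.+1) \prod_(j < n.+1 | (i < j)%N) F i j =
  (\prod_(j < n) F ord0 (lift ord0 j)) *
  \prod_(i < n) \prod_(j < n | (i < j)%N) F (lift ord0 i) (lift ord0 j).
Proof.
rewrite big_ord_recl; congr (_ * _).
  by rewrite big_mkcond big_ord_recl /= mul1r; apply: eq_bigr => j _; rewrite ?lift0.
apply: eq_bigr => i _; rewrite big_mkcond big_ord_recl /= ?lift0 mul1r.
by rewrite [RHS]big_mkcond; apply: eq_bigr => j _; rewrite /= ?lift0 ?ltnS.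
Qed.

Lemma det_cauchymx n (x : 'I_n -> R) : (forall i j, x i + x j != 0) ->
  \det (cauchymx x) = (\prod_(i < n) \prod_(j < n | (i < j)%N) (x i - x j) ^+ 2) /
                      \prod_(i < n) \prod_(j < n) (x i + x j).
Proof.
elim: n x => [|n IH] x x_neq0; first by rewrite det_mx00 !big_ord0 divr1.
rewrite det_schur_ord0 ?mxE ?invr_eq0 // schur_cauchymx // !det_mulmx !det_diag.
rewrite IH => [|i j]; last exact: x_neq0.
set a := x ord0; set y := fun i => x (lift ord0 i).
rewrite prod_ltn_ord_recl big_ord_recl big_ord_recl /=.
under [X in _ = _ / (_ * X)]eq_bigr => i _ do rewrite big_ord_recl /=.
rewrite [X in _ = _ / (_ * X)]big_split /=.
under eq_bigr => i _ do rewrite mxE.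
rewrite prodf_div -/a.
have -> : \prod_(j < n) (a - x (lift ord0 j)) ^+ 2 = (\prod_(i < n) (y i - a)) ^+ 2.
  by rewrite -prodrXl; apply: eq_bigr => j _; rewrite -sqrrN opprB.
have -> : \prod_(i < n) (x (lift ord0 i) + a) = \prod_(i < n) (a + y i).
  by apply: eq_bigr => i _; rewrite addrC.
rewrite -/y !invfM; ring.
Qed.

Lemma cauchymx_psd n (x : 'I_n -> R) (v : 'rV[R]_n) : (forall i, 0 < x i) ->
  0 <= (v *m cauchymx x *m v^T) 0 0.
Proof.
elim: n x v => [|n IH] x v x_gt0; first by rewrite quad_formE big_ord0.
have x_neq0 i j : x i + x j != 0 by rewrite gt_eqF ?addr_gt0.
have M00_gt0 : 0 < cauchymx x ord0 ord0 by rewrite mxE invr_gt0 addr_gt0.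
rewrite quad_form_schur_ord0 ?tr_cauchymx ?gt_eqF //= schur_cauchymx //.
apply: addr_ge0; first by rewrite mulr_ge0 ?sqr_ge0 ?ltW.
set D := diag_mx _; set v' := \row_j _.
have -> : v' *m (D *m cauchymx (x \o lift ord0) *m D) *m v'^T =
          (v' *m D) *m cauchymx (x \o lift ord0) *m (v' *m D)^T.
  by rewrite trmx_mul tr_diag_mx !mulmxA.
by apply: IH => i; exact: x_gt0.
Qed.

Lemma mxtrace_cauchymx n (x : 'I_n -> R) :
  \tr (cauchymx x) = \sum_i (2 * x i)^-1.
Proof. by apply: eq_bigr => i _; rewrite mxE mulr2n mulrDl mul1r. Qed.

Lemma mxtrace_sqr_cauchymx n (x : 'I_n -> R) :
  \tr (cauchymx x *m cauchymx x) = \sum_i \sum_j (x i + x j)^-2.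
Proof.
apply: eq_bigr => i _; rewrite mxE; apply: eq_bigr => j _.
by rewrite !mxE [x j + _]addrC -invfM expr2.
Qed.

End CauchyMatrix.

Lemma ball_vol_ge0 (R : realType) d : 0 <= ball_vol R d.
Proof.
suff : 0 <= (ball_vol_aux R d).1 /\ 0 <= (ball_vol_aux R d).2 by case.
elim: d => [|d [h1 h2]] //=; split => //.
by rewrite mulr_ge0 // divr_ge0 // mulr_ge0 // ltW // pi_gt0.
Qed.

Section CriticalCovariance.
Variables (R : realType) (n d : nat) (V : R) (tau : 'I_n -> R).
Local Notation x := (xx R n d tau).
Local Notation alpha := (V * d%:R * ball_vol R d / 2).
Local Notation beta := (V * d%:R ^+ 2 * ball_vol R d ^+ 2).
Local Notation arow := (\row_i (tau i + d%:R)^-1 : 'rV[R]_n).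

Lemma Sigma_sbE : Sigma_sb R n d V tau = alpha *: cauchymx x.
Proof. by apply/matrixP => i j; rewrite !mxE invfM mulrA. Qed.

Lemma Sigma_spE : Sigma_sp R n d V tau = beta *: (arow^T *m arow).
Proof. by apply/matrixP => i j; rewrite !mxE big_ord1 !mxE invfM mulrA. Qed.

Lemma sum_Sigma_sp_diag (s : R) :
  \sum_(i < n) s * V * d%:R ^+ 2 * ball_vol R d ^+ 2 / (tau i + d%:R) ^+ 2 =
  s * beta * (arow *m arow^T) 0 0.
Proof.
rewrite mxE mulr_sumr; apply: eq_bigr => i _.
by rewrite !mxE -invfM -expr2 !mulrA.
Qed.

Hypothesis x_gt0 : forall i, 0 < x i.

Lemma eig_spread_cauchymx :
  eig_spread (cauchymx x) = Num.sqrt ((n%:R - 1) * Qn R n d tau).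
Proof.
rewrite /eig_spread mxtrace_sqr_cauchymx mxtrace_cauchymx /Qn mulr_sumr.
congr (Num.sqrt (_ * (_ - _))); apply: eq_bigr => l _; rewrite mulr_sumr.
by apply: eq_bigr => k _; rewrite [x l + _]addrC.
Qed.

Lemma S_upperE : S_upper R n d V tau = alpha * eig_ub (cauchymx x).
Proof.
rewrite /S_upper /eig_ub eig_spread_cauchymx mxtrace_cauchymx.
by rewrite invfM; ring.
Qed.

Hypothesis n_gt1 : (1 < n)%N.

Lemma S_lowerE : S_lower R n d V tau = alpha * eig_lb (cauchymx x).
Proof.
set T := \sum_(i < n) (2 * x i)^-1; set N := n%:R : R.
have N1_gt0 : 0 < N - 1 by rewrite subr_gt0 ltr1n.
have meanE : (\sum_(i < n) Num.sqrt (N - 1) / (2 * x i) + Num.sqrt (Qn R n d tau))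
      / (N * Num.sqrt (N - 1)) =
    (T - (T - Num.sqrt ((N - 1) * Qn R n d tau)) / N) / (N - 1).
  set s := Num.sqrt (N - 1); set q := Num.sqrt (Qn R n d tau).
  have s_gt0 : 0 < s by rewrite sqrtr_gt0.
  have NE : N = s ^+ 2 + 1 by rewrite sqr_sqrtr ?subrK // ltW.
  rewrite sqrtrM ?ltW // -/s -/q -mulr_sumr -/T NE addrK; field.
  by rewrite !gt_eqF // ?addr_gt0 // ?exprn_gt0.
rewrite /S_lower /eig_lb eig_spread_cauchymx mxtrace_cauchymx -/T -/N meanE.
rewrite det_cauchymx => [|i j]; last by rewrite gt_eqF // addr_gt0.
by rewrite !invfM; ring.
Qed.

End CriticalCovariance.

Theorem theorem7p6 (R : realType) (d n : nat) (V c : R) (tau : 'I_n -> R) :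
  (1 <= d)%N -> (2 <= n)%N -> 0 <= V -> 0 < c ->
  (forall i : 'I_n, - (d%:R / 2) < tau i) ->
  (forall i j : 'I_n, (i < j)%N -> tau i < tau j) ->
  forall lam : R, eigenvalue (Sigma_cr R n d V c tau) lam ->
    (if c <= 1 then
       S_lower R n d V tau <= lam /\
       lam <= S_upper R n d V tau +
              \sum_(i < n) c * V * (d%:R) ^+ 2 * ball_vol R d ^+ 2
                             / (tau i + d%:R) ^+ 2
     else
       S_lower R n d V tau / c <= lam /\
       lam <= S_upper R n d V tau / c +
              \sum_(i < n) V * (d%:R) ^+ 2 * ball_vol R d ^+ 2
                             / (tau i + d%:R) ^+ 2).
Proof.
move=> _ n_gt1 V_ge0 c_gt0 tau_gt _ lam.
have x_gt0 i : 0 < xx R n d tau i by have := tau_gt i; rewrite /xx; lra.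
have kappa_ge0 := ball_vol_ge0 R d.
have alpha_ge0 : 0 <= V * d%:R * ball_vol R d / 2 by rewrite !mulr_ge0.
have beta_ge0 : 0 <= V * d%:R ^+ 2 * ball_vol R d ^+ 2 by rewrite !mulr_ge0 ?exprn_ge0.
have C_bounds := sym_psd_rayleigh (tr_cauchymx _) (fun v => cauchymx_psd v x_gt0) n_gt1.
rewrite /Sigma_cr Sigma_sbE Sigma_spE S_lowerE // S_upperE // sum_Sigma_sp_diag.
case: ifP => _; rewrite scalerA => ev.
  have c_beta_ge0 := mulr_ge0 (ltW c_gt0) beta_ge0.
  exact/andP/(eigenvalue_rank_one_update C_bounds alpha_ge0 c_beta_ge0 ev).
have := sum_Sigma_sp_diag d V tau 1; rewrite !mul1r => ->.
have cV_alpha_ge0 : 0 <= c^-1 * (V * d%:R * ball_vol R d / 2).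
  by rewrite mulr_ge0 // invr_ge0 ltW.
have := eigenvalue_rank_one_update C_bounds cV_alpha_ge0 beta_ge0 ev.
by rewrite ![_ / c]mulrC !mulrA => /andP.
Qed.
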